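(* Let $A$ be a metabelian Lie $U$-algebra over a field $k$ and let $B$ be a subalgebra of $A$. Then $B$ is a $U$-algebra.
   Context: A Lie algebra is metabelian if $(a\circ b)\circ(c\circ d)=0$ identically; $\mathrm{Fit}(A)$ is the ideal generated by all elements lying in nilpotent ideals of $A$. If $\mathrm{Fit}(A)$ is abelian, choose $\{a_\alpha:\alpha\in\Lambda\}\subseteq A$ whose images form a basis of $A/\mathrm{Fit}(A)$, let $R=k[x_\alpha:\alpha\in\Lambda]$, and make $\mathrm{Fit}(A)$ an $R$-module via $b\cdot x_\alpha=b\circ a_\alpha$ (extended multiplicatively and linearly). $A$ is a $U$-algebra if $\mathrm{Fit}(A)$ is abelian and a torsion-free $R$-module. *)

From HB Require Import structures.
From mathcomp Require Import all_boot all_order all_algebra.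
From mathcomp Require Import mpoly.
Set Implicit Arguments. Unset Strict Implicit. Unset Printing Implicit Defensive.
Import GRing.Theory.
Local Open Scope ring_scope.

Section LieDefs.
Variables (k : fieldType) (A : lmodType k) (br : A -> A -> A).

Definition lie_bracket : Prop :=
  (forall (c : k) (x y z : A), br (c *: x + y) z = c *: br x z + br y z) /\
  (forall (c : k) (x y z : A), br z (c *: x + y) = c *: br z x + br z y) /\
  (forall x : A, br x x = 0) /\
  (forall x y z : A, br x (br y z) + br y (br z x) + br z (br x y) = 0).

Definition metabelian : Prop :=
  forall a b c d : A, br (br a b) (br c d) = 0.

Definition subspace (V : A -> Prop) : Prop :=
  V 0 /\ forall (c : k) x y, V x -> V y -> V (c *: x + y).

Definition subalgebra (S : A -> Prop) : Prop :=
  subspace S /\ forall x y, S x -> S y -> S (br x y).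

Definition ideal (S I : A -> Prop) : Prop :=
  (forall x, I x -> S x) /\ subspace I /\ forall x y, I x -> S y -> I (br x y).

Definition span (P : A -> Prop) : A -> Prop :=
  fun x => forall V, subspace V -> (forall y, P y -> V y) -> V x.

(* lower central series of I: lcs I 0 = I^1 = I, lcs I (n+1) = I^(n+2) = [I^(n+1), I] *)
Fixpoint lcs (I : A -> Prop) (n : nat) : A -> Prop :=
  match n with
  | O => I
  | S n' => span (fun z => exists x y, lcs I n' x /\ I y /\ z = br x y)
  end.

Definition nilpotent_ideal (S I : A -> Prop) : Prop :=
  ideal S I /\ exists n, forall x, lcs I n x -> x = 0.

Definition Fit (S : A -> Prop) : A -> Prop :=
  fun x => forall J, ideal S J ->
    (forall y, (exists I, nilpotent_ideal S I /\ I y) -> J y) -> J x.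

Definition Fit_abelian (S : A -> Prop) : Prop :=
  forall x y, Fit S x -> Fit S y -> br x y = 0.

Definition basis_mod_Fit (S : A -> Prop) (Lambda : Type) (a : Lambda -> A) : Prop :=
  (forall al, S (a al)) /\
  (forall n (tau : 'I_n -> Lambda) (c : 'I_n -> k), injective tau ->
      Fit S (\sum_(i < n) c i *: a (tau i)) -> forall i, c i = 0) /\
  (forall s, S s -> exists n (tau : 'I_n -> Lambda) (c : 'I_n -> k),
      Fit S (s - \sum_(i < n) c i *: a (tau i))).

(* Action of the monomial prod_i x_(sigma i)^(m i) on b, where b . x_al = b o a_al *)
Definition mon_act (Lambda : Type) (a : Lambda -> A) n (sigma : 'I_n -> Lambda)
  (m : 'X_{1..n}) (b : A) : A :=
  foldr (fun i y => iter (m i) (fun z => br z (a (sigma i))) y) b (enum 'I_n).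

(* Action of p in k[x_(sigma 0), ..., x_(sigma (n-1))] (a subring of R = k[x_al]) *)
Definition poly_act (Lambda : Type) (a : Lambda -> A) n (sigma : 'I_n -> Lambda)
  (p : {mpoly k[n]}) (b : A) : A :=
  \sum_(m <- msupp p) p@_m *: mon_act a sigma m b.

(* Fit(S) is a torsion-free R-module: every element of R lies in
   k[x_(sigma 0),...,x_(sigma (n-1))] for some injective sigma. *)
Definition torsion_free (S : A -> Prop) (Lambda : Type) (a : Lambda -> A) : Prop :=
  forall n (sigma : 'I_n -> Lambda), injective sigma ->
  forall p : {mpoly k[n]}, p != 0 ->
  forall b, Fit S b -> b <> 0 -> poly_act a sigma p b <> 0.

Definition U_algebra (S : A -> Prop) : Prop :=
  Fit_abelian S /\
  forall (Lambda : Type) (a : Lambda -> A), basis_mod_Fit S a -> torsion_free S a.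

End LieDefs.

From mathcomp Require Import all_boot all_order all_algebra.
From mathcomp Require Import mpoly.
From mathcomp Require Import classical_sets.
From Stdlib Require Import Classical ProofIrrelevance.
Set Implicit Arguments. Unset Strict Implicit. Unset Printing Implicit Defensive.
Import GRing.Theory.
Local Open Scope ring_scope.

(* In a metabelian algebra every bracket lies in Fit(A), and torsion-freeness
   of Fit(A) says that b . y^m <> 0 for b <> 0 in Fit(A) and y outside Fit(A).
   If B is not abelian, b := [u, v] <> 0 with u, v in B is such an element, and
   it forces every nilpotent ideal of B into Fit(A): iterating ad y on b would
   otherwise reach the vanishing term of its lower central series.  Hence
   Fit(B) = Fit(A) /\ B is abelian, elements of B independent modulo Fit(B) are
   independent modulo Fit(A), and they extend (by Zorn) to a basis of
   A / Fit(A), through which torsion-freeness is inherited from A.  If B is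
   abelian then Fit(B) = B and only constants act. *)

Section Subspace.
Variables (k : fieldType) (A : lmodType k) (V : A -> Prop).
Hypothesis HV : subspace V.

Lemma subspace0 : V 0.
Proof. by case: HV. Qed.

Lemma subspaceD x y : V x -> V y -> V (x + y).
Proof. by case: HV => _ H Vx Vy; have := H 1 _ _ Vx Vy; rewrite scale1r. Qed.

Lemma subspaceZ c x : V x -> V (c *: x).
Proof. by case: HV => V0 H Vx; have := H c _ _ Vx V0; rewrite addr0. Qed.

Lemma subspace_sum (I : Type) (r : seq I) (P : pred I) (f : I -> A) :
  (forall i, P i -> V (f i)) -> V (\sum_(i <- r | P i) f i).
Proof.
move=> Vf; elim: r => [|i r IH]; first by rewrite big_nil; apply: subspace0.
by rewrite big_cons; case: ifP => Pi //; apply: subspaceD (Vf _ Pi) IH.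
Qed.

Lemma subspaceI (W : A -> Prop) : subspace W -> subspace (fun x => V x /\ W x).
Proof.
case: HV => V0 HVs [W0 HWs]; split=> // c x y [Vx Wx] [Vy Wy].
by split; [apply: HVs | apply: HWs].
Qed.

End Subspace.

Lemma subspace_zero (k : fieldType) (A : lmodType k) : subspace (fun x : A => x = 0).
Proof. by split=> // c x y -> ->; rewrite scaler0 addr0. Qed.

Section LieBracket.
Variables (k : fieldType) (A : lmodType k) (br : A -> A -> A).
Hypothesis HL : lie_bracket br.

Lemma br0l z : br 0 z = 0.
Proof.
case: HL => H _; have := H 1 0 0 z; rewrite !scale1r addr0 => E.
by apply: (@addrI _ (br 0 z)); rewrite addr0 -E.
Qed.

Lemma brDl x y z : br (x + y) z = br x z + br y z.
Proof. by case: HL => H _; have := H 1 x y z; rewrite !scale1r. Qed.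

Lemma brDr x y z : br z (x + y) = br z x + br z y.
Proof. by case: HL => _ [H _]; have := H 1 x y z; rewrite !scale1r. Qed.

Lemma brZl c x z : br (c *: x) z = c *: br x z.
Proof. by case: HL => H _; have := H c x 0 z; rewrite addr0 br0l addr0. Qed.

Lemma br_anti x y : br x y = - br y x.
Proof.
case: HL => _ [_ [brxx _]]; apply/eqP; rewrite -subr_eq0 opprK.
by have := brxx (x + y); rewrite brDl !brDr !brxx add0r addr0 => ->.
Qed.

End LieBracket.

Section Fitting.
Variables (k : fieldType) (A : lmodType k) (br : A -> A -> A).

Lemma ideal_self (S : A -> Prop) : subalgebra br S -> ideal br S S.
Proof. by case. Qed.

Lemma Fit_sub (S : A -> Prop) x : subalgebra br S -> Fit br S x -> S x.
Proof.
move=> HS FSx; apply: FSx; first exact: ideal_self.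
by move=> y [I [[[IS _] _] Iy]]; apply: IS.
Qed.

Lemma Fit_min (S J : A -> Prop) x : ideal br S J ->
  (forall I y, nilpotent_ideal br S I -> I y -> J y) -> Fit br S x -> J x.
Proof. by move=> HJ HI FSx; apply: FSx => // y [I [nilI Iy]]; apply: HI Iy. Qed.

Lemma nilpotent_ideal_sub_Fit (S I : A -> Prop) y :
  nilpotent_ideal br S I -> I y -> Fit br S y.
Proof. by move=> nilI Iy J _ HJ; apply: HJ; exists I. Qed.

Lemma Fit_ideal (S : A -> Prop) : subalgebra br S -> ideal br S (Fit br S).
Proof.
move=> HS; split; first by move=> x; apply: Fit_sub.
split; first split.
- by move=> J [_ [HJ _]] _; apply: subspace0.
- move=> c x y FSx FSy J HJ nilJ; case: (HJ) => _ [[_ HJs] _].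
  by apply: HJs; [apply: FSx | apply: FSy].
- move=> x y FSx Sy J HJ nilJ; case: (HJ) => _ [_ HJb].
  by apply: HJb => //; apply: FSx.
Qed.

Lemma abelian_ideal_nilpotent (S I : A -> Prop) : ideal br S I ->
  (forall x y, I x -> I y -> br x y = 0) -> nilpotent_ideal br S I.
Proof.
move=> HI abI; split=> //; exists 1%N => x /= Hx.
apply: (Hx (fun z => z = 0)); first exact: subspace_zero.
by move=> z [x' [y' [Ix' [Iy' ->]]]]; apply: abI.
Qed.

Lemma poly_act_ord0 (Lambda : Type) (a : Lambda -> A) (sigma : 'I_0 -> Lambda)
    (p : {mpoly k[0]}) b :
  p != 0 -> b <> 0 -> poly_act br a sigma p b <> 0.
Proof.
move=> p_neq0 b_neq0; rewrite /poly_act /mon_act enum_ord0 /=.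
have := msupp_uniq p.
case E: (msupp p) => [|m0 [|m1 s]] uniq_p.
- by move/eqP: E; rewrite msupp_eq0 (negbTE p_neq0).
- rewrite big_seq1 => /eqP; rewrite scaler_eq0 => /orP [|/eqP //].
  by rewrite mcoeff_eq0 E mem_seq1 eqxx.
- have m01 : m0 = m1 by apply/mnmP => -[].
  by move: uniq_p; rewrite m01 /= inE eqxx.
Qed.

Lemma abelian_U_algebra (B : A -> Prop) : subalgebra br B ->
  (forall x y, B x -> B y -> br x y = 0) -> U_algebra br B.
Proof.
move=> HB abB; split=> [x y FBx FBy|].
  by apply: abB; [exact: Fit_sub HB FBx | exact: Fit_sub HB FBy].
move=> Lambda a [Ba [indep_a _]] [|n] sigma _ p p_neq0 b _ b_neq0.
  exact: poly_act_ord0.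
have FB_B y : B y -> Fit br B y.
  move=> By; apply: (@nilpotent_ideal_sub_Fit B B) => //.
  by apply: abelian_ideal_nilpotent => //; apply: ideal_self.
have inj0 : injective (fun _ : 'I_1 => sigma ord0).
  by move=> i j _; rewrite (ord1 i) (ord1 j).
have := indep_a 1%N _ (fun _ => 1) inj0; rewrite big_ord1 scale1r.
by move=> /(_ (FB_B _ (Ba _)) ord0) /eqP; rewrite oner_eq0.
Qed.

End Fitting.

Section FreeModulo.
Variables (k : fieldType) (A : lmodType k) (F : A -> Prop).
Hypothesis HF : subspace F.

Definition free_mod (M : A -> Prop) : Prop :=
  forall (l : seq A) (c : A -> k), uniq l -> (forall x, x \in l -> M x) ->
  F (\sum_(x <- l) c x *: x) -> forall x, x \in l -> c x = 0.

Definition spanned_mod (M : A -> Prop) (s : A) : Prop :=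
  exists l (c : A -> k), (forall x, x \in l -> M x) /\ F (s - \sum_(x <- l) c x *: x).

Lemma free_mod_sub (M N : A -> Prop) :
  (forall x, M x -> N x) -> free_mod N -> free_mod M.
Proof. by move=> MN freeN l c uniq_l lM; apply: freeN => // x /lM /MN. Qed.

Lemma free_modU1 (M : A -> Prop) s : free_mod M -> ~ spanned_mod M s ->
  free_mod (fun x => M x \/ x = s).
Proof.
move=> freeM nspan_s l c uniq_l lMs Fl x xl.
have [sl | snl] := boolP (s \in l); last first.
  apply: (freeM l c uniq_l) => // y yl; case: (lMs y yl) => // ys.
  by move: snl; rewrite -ys yl.
rewrite (perm_big _ (perm_to_rem sl)) big_cons /= in Fl.
set l' := rem s l in Fl.
have l'M y : y \in l' -> M y.
  rewrite /l' (mem_rem_uniq _ uniq_l) inE => /andP [ys yl].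
  by case: (lMs y yl) => // /eqP; rewrite (negbTE ys).
have cs0 : c s = 0.
  (* otherwise dividing by [c s] writes [s] modulo [F] in terms of [l'] *)
  apply: NNPP => /eqP cs_neq0; apply: nspan_s.
  exists l', (fun y => - ((c s)^-1 * c y)); split=> //.
  have -> : \sum_(y <- l') - ((c s)^-1 * c y) *: y =
            - ((c s)^-1 *: \sum_(y <- l') c y *: y).
    by rewrite scaler_sumr -sumrN; apply: eq_bigr => y _; rewrite scaleNr scalerA.
  rewrite opprK -{1}[s]scale1r -(mulVf cs_neq0) -scalerA -scalerDr.
  exact: subspaceZ.
have [-> // | xs] := eqVneq x s.
rewrite cs0 scale0r add0r in Fl; apply: (freeM l' c (rem_uniq _ uniq_l) l'M Fl).
by rewrite /l' (mem_rem_uniq _ uniq_l) inE xs xl.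
Qed.

Section Extension.
Variable V0 : A -> Prop.
Hypothesis freeV0 : free_mod V0.

Local Open Scope classical_set_scope.

Lemma chain_finite_bound (G : set (set A)) (l : seq A) :
  total_on G subset -> (forall x, x \in l -> (\bigcup_(X in G) X) x \/ V0 x) ->
  exists X, (X = set0 \/ G X) /\ forall x, x \in l -> X x \/ V0 x.
Proof.
move=> totG; elim: l => [|y l IH] ly.
  by exists set0; split; [left | move=> x; rewrite in_nil].
have [X [X0G lX]] : exists X, (X = set0 \/ G X) /\ forall x, x \in l -> X x \/ V0 x.
  by apply: IH => x xl; apply: ly; rewrite inE xl orbT.
have lX' x : x \in y :: l -> (x = y) \/ X x \/ V0 x.
  by rewrite inE => /orP [/eqP -> | /lX]; [left | right].
case: (ly y (mem_head _ _)) => [[Y GY Yy] | V0y]; last first.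
  by exists X; split=> // x /lX' [-> | //]; right.
case: X0G lX' => [-> | GX] lX'.
  exists Y; split; [by right | move=> x /lX' [-> | [[] | ]]]; by [left | right].
case: (totG X Y GX GY) => [XY | YX].
  exists Y; split; [by right | move=> x /lX' [-> | [/XY | ]]]; by [left | right].
by exists X; split=> [| x /lX' [-> | //]]; [right | left; apply: YX].
Qed.

Lemma free_mod_chain (G : set (set A)) :
  (forall X, G X -> free_mod (X `|` V0)) -> total_on G subset ->
  free_mod ((\bigcup_(X in G) X) `|` V0).
Proof.
move=> freeG totG l c uniq_l lGV.
have [X [[-> | GX] lX]] := chain_finite_bound totG lGV.
  by apply: freeV0 => // x /lX [[] | ].
exact: (freeG X GX).
Qed.

Lemma free_mod_extension : exists M : A -> Prop,
  (forall x, V0 x -> M x) /\ free_mod M /\ forall s, spanned_mod M s.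
Proof.
(* Zorn is applied to the sets [X] with [X `|` V0] free, so that the empty
   chain is admissible. *)
have [X [freeX maxX]] := Zorn_bigcup free_mod_chain.
exists (X `|` V0); split; first by move=> x; right.
split=> // s; apply: NNPP => nspan_s.
have Xs : ~ X s.
  move=> Xs; apply: nspan_s; exists [:: s], (fun _ => 1); split.
    by move=> x; rewrite inE => /eqP ->; left.
  by rewrite big_seq1 scale1r subrr; apply: subspace0.
apply: (maxX (X `|` [set s])).
  by split=> [x | /(_ s (or_intror erefl))]; [left |].
apply: free_mod_sub (free_modU1 freeX nspan_s).
by move=> x [[? | ->] | ?]; [left; left | right | left; right].
Qed.

End Extension.

Definition free_family_mod n (v : 'I_n -> A) : Prop :=
  forall c : 'I_n -> k, F (\sum_i c i *: v i) -> forall i, c i = 0.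

Lemma free_family_mod_inj n (v : 'I_n -> A) : free_family_mod v -> injective v.
Proof.
move=> freev i j vij; apply/eqP; apply: contraT => nij.
have delta_sum l : \sum_i0 (i0 == l)%:R *: v i0 = v l.
  rewrite (bigD1 l) //= eqxx scale1r big1 ?addr0 // => i0 /negbTE ->.
  by rewrite scale0r.
have := freev (fun l => (l == i)%:R - (l == j)%:R).
have -> : \sum_l ((l == i)%:R - (l == j)%:R) *: v l = 0.
  by under eq_bigr do rewrite scalerBl; rewrite sumrB !delta_sum vij subrr.
move=> /(_ (subspace0 HF) i); rewrite eqxx (negbTE nij) subr0.
by move/eqP; rewrite oner_eq0.
Qed.

Lemma free_mod_image n (v : 'I_n -> A) :
  free_family_mod v -> free_mod (fun x => exists i, x = v i).
Proof.
move=> freev l c uniq_l lv Fl.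
pose r := [seq v i | i <- enum 'I_n & v i \in l].
have perm_lr : perm_eq l r.
  apply: uniq_perm => //.
    rewrite map_inj_uniq; first by rewrite filter_uniq ?enum_uniq.
    exact: free_family_mod_inj freev.
  move=> x; apply/idP/idP => [xl | /mapP [i]].
    case: (lv x xl) => i xi; apply/mapP; exists i => //.
    by rewrite mem_filter -xi xl mem_enum.
  by rewrite mem_filter => /andP [vil _] ->.
pose c' i := if v i \in l then c (v i) else 0.
have sum_c' : \sum_i c' i *: v i = \sum_(x <- l) c x *: x.
  rewrite (perm_big _ perm_lr) big_map big_filter big_enum_cond /= [RHS]big_mkcond /=.
  by apply: eq_bigr => i _; rewrite /c'; case: ifP; rewrite ?scale0r.
rewrite -sum_c' in Fl; move=> x xl; case: (lv x xl) => i xi.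
by have := freev _ Fl i; rewrite /c' -xi xl.
Qed.

Lemma free_family_of_free_mod (M : A -> Prop) n (tau : 'I_n -> {x | M x}) :
  free_mod M -> injective tau -> free_family_mod (fun i => sval (tau i)).
Proof.
move=> freeM inj_tau c Fc.
have inj_v : injective (fun i => sval (tau i)).
  move=> i j eq_ij; apply: inj_tau; move: (tau i) (tau j) eq_ij => [x Mx] [y My] /= xy.
  by subst y; congr exist; apply: proof_irrelevance.
pose c' x := if [pick i | sval (tau i) == x] is Some i then c i else 0.
have c'E i : c' (sval (tau i)) = c i.
  by rewrite /c'; case: pickP => [j /eqP /inj_v -> | /(_ i)]; rewrite ?eqxx.
pose l := [seq sval (tau i) | i <- enum 'I_n].
have sum_c' : \sum_(x <- l) c' x *: x = \sum_i c i *: sval (tau i).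
  by rewrite big_map big_enum /=; apply: eq_bigr => i _; rewrite c'E.
move=> i; rewrite -c'E; apply: (freeM l c').
- by rewrite map_inj_uniq ?enum_uniq.
- by move=> x /mapP [j _ ->]; case: (tau j).
- by rewrite sum_c'.
- by apply: map_f; rewrite mem_enum.
Qed.

Lemma spanned_family_of_spanned_mod (M : A -> Prop) s : spanned_mod M s ->
  exists n (tau : 'I_n -> {x | M x}) (c : 'I_n -> k),
    F (s - \sum_(i < n) c i *: sval (tau i)).
Proof.
case=> l [c [lM Fs]].
have Ml (i : 'I_(size l)) : M (nth 0 l i) by apply: lM; apply: mem_nth.
exists (size l), (fun i => exist M _ (Ml i)), (fun i => c (nth 0 l i)).
suff -> : \sum_(i < size l) c (nth 0 l i) *: nth 0 l i = \sum_(x <- l) c x *: x by [].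
by rewrite (big_nth 0) big_mkord.
Qed.

Lemma basis_mod_extension n (v : 'I_n -> A) : free_family_mod v ->
  exists M : A -> Prop, (forall i, M (v i)) /\
    (forall m (tau : 'I_m -> {x | M x}), injective tau ->
       free_family_mod (fun i => sval (tau i))) /\
    (forall s, exists m (tau : 'I_m -> {x | M x}) (c : 'I_m -> k),
       F (s - \sum_(i < m) c i *: sval (tau i))).
Proof.
move=> freev; have [M [vM [freeM spanM]]] := free_mod_extension (free_mod_image freev).
exists M; split; first by move=> i; apply: vM; exists i.
split=> [m tau | s]; first exact: free_family_of_free_mod.
exact: spanned_family_of_spanned_mod.
Qed.

End FreeModulo.

Section MetabelianUAlgebra.
Variables (k : fieldType) (A : lmodType k) (br : A -> A -> A).
Hypothesis HL : lie_bracket br.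
Hypothesis HM : metabelian br.

Let FA := Fit br (fun _ : A => True).

Lemma subalgebraT : subalgebra br (fun _ : A => True).
Proof. by []. Qed.

Lemma FA_subspace : subspace FA.
Proof. by case: (Fit_ideal subalgebraT) => _ []. Qed.

(* [[A, A]] is an abelian ideal, but its span is awkward to handle; instead we
   use the elements that centralise [[A, A]] and commute with every element of
   its centraliser: they form an abelian ideal containing every bracket. *)
Lemma bracket_in_Fit u v : FA (br u v).
Proof.
pose Z z := forall c d, br z (br c d) = 0.
pose I z := Z z /\ forall w, Z w -> br z w = 0.
have HI : ideal br (fun _ => True) I.
  split=> //; split; first split.
  - by split=> [c d | w _]; rewrite (br0l HL).
  - move=> c x y [Zx Wx] [Zy Wy]; split.
      by move=> c' d; rewrite (brDl HL) (brZl HL) Zx Zy scaler0 addr0.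
    by move=> w Zw; rewrite (brDl HL) (brZl HL) Wx // Wy // scaler0 addr0.
  - move=> x y _ _; split=> [c d | w Zw]; first exact: HM.
    by rewrite (br_anti HL) Zw oppr0.
have abI x y : I x -> I y -> br x y = 0 by move=> [_ Wx] [Zy _]; apply: Wx.
apply: (nilpotent_ideal_sub_Fit (abelian_ideal_nilpotent HI abI)).
split=> [c d | w Zw]; first exact: HM.
by rewrite (br_anti HL) Zw oppr0.
Qed.

Hypothesis HU : U_algebra br (fun _ => True).

Lemma poly_act_free_neq0 (Lambda : Type) (a : Lambda -> A) n (sigma : 'I_n -> Lambda)
    (p : {mpoly k[n]}) b :
  free_family_mod FA (fun i => a (sigma i)) -> p != 0 -> FA b -> b <> 0 ->
  poly_act br a sigma p b <> 0.
Proof.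
move=> free_as p_neq0 FAb b_neq0.
have inj_as := free_family_mod_inj FA_subspace free_as.
have [M [asM [freeM spanM]]] := basis_mod_extension FA_subspace free_as.
have basisM : basis_mod_Fit br (fun _ => True) (fun x : {x | M x} => sval x).
  by split=> //; split=> [m tau c inj_tau | //]; apply: freeM.
pose sigma' i := exist M (a (sigma i)) (asM i).
have inj_sigma' : injective sigma'.
  by move=> i j /(congr1 sval) /inj_as.
exact: (proj2 HU _ _ basisM n sigma' inj_sigma' p p_neq0 b FAb b_neq0).
Qed.

Lemma iter_br_neq0 x b m : ~ FA x -> FA b -> b <> 0 ->
  iter m (fun z => br z x) b <> 0.
Proof.
move=> FAx FAb b_neq0.
have free_x : free_family_mod FA (fun _ : 'I_1 => x).
  move=> c; rewrite big_ord1 => FAcx i; rewrite (ord1 i).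
  apply: NNPP => /eqP c_neq0; apply: FAx.
  by rewrite -[x]scale1r -(mulVf c_neq0) -scalerA; exact: subspaceZ FA_subspace _ _ FAcx.
have Xm_neq0 : ('X_[U_(ord0) *+ m] : {mpoly k[1]}) != 0.
  by rewrite -msupp_eq0 msuppX.
have := poly_act_free_neq0 (sigma := id) free_x Xm_neq0 FAb b_neq0.
rewrite /poly_act msuppX big_seq1 mcoeffX eqxx scale1r /mon_act.
by rewrite enum_ordSl enum_ord0 /= mulmnE mnm1E eqxx mul1n.
Qed.

Section Subalgebra.
Variable B : A -> Prop.
Hypothesis HB : subalgebra br B.

Lemma FA_subalgebra_ideal : ideal br B (fun y => FA y /\ B y).
Proof.
split=> [x [] // |]; split; first by apply: subspaceI; [exact: FA_subspace | case: HB].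
move=> x y [FAx Bx] By; split; last by case: HB => _; apply.
by case: (Fit_ideal subalgebraT) => _ [_]; apply.
Qed.

Lemma FA_subalgebra_sub_Fit y : FA y -> B y -> Fit br B y.
Proof.
move=> FAy By; apply: (nilpotent_ideal_sub_Fit (I := fun y => FA y /\ B y)) => //.
apply: abelian_ideal_nilpotent; first exact: FA_subalgebra_ideal.
by move=> x z [FAx _] [FAz _]; apply: (proj1 HU).
Qed.

Variable b : A.
Hypotheses (Bb : B b) (FAb : FA b) (b_neq0 : b <> 0).

(* For [y] outside [Fit A], the powers of [ad y] never kill [b], yet they push
   [b] arbitrarily far down the lower central series of any ideal of [B]
   containing [y]. *)
Lemma nilpotent_ideal_sub_FA I y : nilpotent_ideal br B I -> I y -> FA y.
Proof.
move=> [[IB [HIs HIb]] [N lcsN0]] Iy; apply: NNPP => FAy.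
have lcs_iter j : lcs br I j (iter j.+1 (fun z => br z y) b).
  elim: j => [|j IH] /=.
    by rewrite (br_anti HL) -scaleN1r; exact: subspaceZ HIs _ _ (HIb _ _ Iy Bb).
  by move=> V _; apply; exists (iter j.+1 (fun z => br z y) b), y.
exact: iter_br_neq0 FAy FAb b_neq0 (lcsN0 _ (lcs_iter N)).
Qed.

Lemma Fit_subalgebra_sub_FA y : Fit br B y -> FA y /\ B y.
Proof.
apply: (Fit_min FA_subalgebra_ideal) => I z nilI Iz; split.
  exact: nilpotent_ideal_sub_FA nilI Iz.
by case: nilI => [[IB _] _]; apply: IB.
Qed.

Lemma U_algebra_of_Fit_element : U_algebra br B.
Proof.
split=> [x y FBx FBy | Lambda a [Ba [indep_a _]] n sigma inj_sigma p p_neq0 y FBy y_neq0].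
  by apply: (proj1 HU); apply: (proj1 (Fit_subalgebra_sub_FA _)).
apply: poly_act_free_neq0 => //; last exact: (proj1 (Fit_subalgebra_sub_FA FBy)).
move=> c FAc; apply: (indep_a n sigma c inj_sigma); apply: FA_subalgebra_sub_Fit => //.
apply: subspace_sum => [| i _]; first by case: HB.
by apply: subspaceZ; [case: HB | apply: Ba].
Qed.

End Subalgebra.
End MetabelianUAlgebra.

Theorem lemma3p2p2 (k : fieldType) (A : lmodType k) (br : A -> A -> A) :
  lie_bracket br -> metabelian br -> U_algebra br (fun _ => True) ->
  forall B : A -> Prop, subalgebra br B -> U_algebra br B.
Proof.
move=> HL HM HU B HB.
have [[u [v [Bu [Bv uv_neq0]]]] | abB] :=
  classic (exists u v, B u /\ B v /\ br u v <> 0).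
  apply: (U_algebra_of_Fit_element HL HU HB _ (bracket_in_Fit HL HM u v) uv_neq0).
  by case: HB => _; apply.
apply: (abelian_U_algebra HB) => x y Bx By.
by apply: NNPP => xy_neq0; apply: abB; exists x, y.
Qed.
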